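(* Let $\beta=(\pi_\ell)_{\ell=1}^L$ be a chainable architecture. Then for all $1\le q\le s<t\le L$, the patterns $\pi_q*\cdots*\pi_s$ and $\pi_{s+1}*\cdots*\pi_t$ are well defined, the pair $(\pi_q*\cdots*\pi_s,\ \pi_{s+1}*\cdots*\pi_t)$ is chainable, and $$r(\pi_q*\cdots*\pi_s,\ \pi_{s+1}*\cdots*\pi_t)=r(\pi_s,\pi_{s+1}).$$
   Context: A pattern is a tuple $\pi=(a,b,c,d)$ of positive integers. Patterns $\pi=(a,b,c,d),\pi'=(a',b',c',d')$ are chainable if $ac/a'=b'd'/d$, this common value $r(\pi,\pi')$ is an integer, $a\mid a'$ and $d'\mid d$; then $\pi*\pi':=(a,bd/d',a'c'/a,d')$. An architecture $\beta=(\pi_\ell)_{\ell=1}^L$, $\pi_\ell=(a_\ell,b_\ell,c_\ell,d_\ell)$, is a sequence of patterns with $a_\ell c_\ell d_\ell=a_{\ell+1}b_{\ell+1}d_{\ell+1}$; it is chainable if every consecutive pair $(\pi_\ell,\pi_{\ell+1})$ is chainable. $\pi_q*\cdots*\pi_s$ denotes the iterated product $((\pi_q*\pi_{q+1})*\cdots)*\pi_s$ (equal to $\pi_q$ if $q=s$). *)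

From mathcomp Require Import all_boot.
Set Implicit Arguments. Unset Strict Implicit. Unset Printing Implicit Defensive.

Record pattern := Pattern { pa : nat; pb : nat; pc : nat; pd : nat }.

Definition pattern_pos (p : pattern) : Prop :=
  0 < pa p /\ 0 < pb p /\ 0 < pc p /\ 0 < pd p.

(* Chainability of (p, p').  For positive entries, the rational equation
   a c / a' = b' d' / d is equivalent to a c d = a' b' d'; the common value
   being an integer means a' divides a c. *)
Definition chainable (p p' : pattern) : Prop :=
  pa p * pc p * pd p = pa p' * pb p' * pd p' /\
  pa p' %| pa p * pc p /\
  pa p %| pa p' /\
  pd p' %| pd p.

(* the common value r(p, p') = a c / a' (an exact division when chainable) *)
Definition rval (p p' : pattern) : nat := (pa p * pc p) %/ pa p'.

Definition pstar (p p' : pattern) : pattern :=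
  Pattern (pa p) (pb p * pd p %/ pd p') (pa p' * pc p' %/ pa p) (pd p').

Definition pstar_opt (p p' : pattern) : option pattern :=
  if (pa p * pc p * pd p == pa p' * pb p' * pd p')
     && (pa p' %| pa p * pc p) && (pa p %| pa p') && (pd p' %| pd p)
  then Some (pstar p p') else None.

(* iter_prod beta q n = pi_q * pi_{q+1} * ... * pi_{q+n}, left-associated,
   or None if some intermediate pair is not chainable (ill-defined). *)
Fixpoint iter_prod (beta : nat -> pattern) (q n : nat) : option pattern :=
  match n with
  | 0 => Some (beta q)
  | n'.+1 => match iter_prod beta q n' with
             | Some P => pstar_opt P (beta (q + n))
             | None => None
             end
  end.

Definition iprod (beta : nat -> pattern) (q s : nat) : option pattern :=
  iter_prod beta q (s - q).

Definition architecture (beta : nat -> pattern) (L : nat) : Prop :=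
  (forall l, 1 <= l <= L -> pattern_pos (beta l)) /\
  (forall l, 1 <= l < L ->
     pa (beta l) * pc (beta l) * pd (beta l)
     = pa (beta l.+1) * pb (beta l.+1) * pd (beta l.+1)).

Definition chainable_architecture (beta : nat -> pattern) (L : nat) : Prop :=
  architecture beta L /\ (forall l, 1 <= l < L -> chainable (beta l) (beta l.+1)).

From mathcomp Require Import all_boot.

(** A product [pi_q * ... * pi_s] only remembers [a] and [b d] of its first
    factor and [a c] and [d] of its last one, and the chain of divisibilities
    [a_q | a_s], [d_s | d_q].  Chainability of two such products and their
    [r] value are expressed through exactly these quantities, so they reduce
    to chainability of the two adjacent factors [pi_s], [pi_(s+1)].  No
    positivity is needed: every division involved is exact. *)

Record spans (P p p' : pattern) : Prop := Spans {
  spans_a : pa P = pa p;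
  spans_bd : pb P * pd P = pb p * pd p;
  spans_ac : pa P * pc P = pa p' * pc p';
  spans_d : pd P = pd p';
  spans_dvd_a : pa p %| pa p';
  spans_dvd_d : pd p' %| pd p }.

Lemma spans_refl (p : pattern) : spans p p p.
Proof. by []. Qed.

Section Spans.

Variables (P P' p1 p2 p1' p2' : pattern).
Hypotheses (sP : spans P p1 p2) (sP' : spans P' p1' p2')
           (ch : chainable p2 p1').

Lemma chainable_spans : chainable P P'.
Proof.
case: sP sP' ch => a bd ac d dva dvd [a' bd' ac' d' dva' dvd'] [e [h1 [h2 h3]]].
rewrite /chainable ac d a' -[pa p1' * _ * _]mulnA bd' mulnA e a.
split=> //; split=> //.
split; first exact: dvdn_trans dva h2.
by rewrite d'; apply: dvdn_trans dvd' h3.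
Qed.

Lemma rval_spans : rval P P' = rval p2 p1'.
Proof. by case: sP sP' => _ _ ac _ _ _ [a' _ _ _ _ _]; rewrite /rval ac a'. Qed.

Lemma spans_pstar : spans (pstar P P') p1 p2'.
Proof.
have [_ [_ [dva dvd]]] := chainable_spans.
case: sP sP' ch => a bd ac d dva1 dvd1 [a' bd' ac' d' dva1' dvd1'] [_ [_ [h2 h3]]].
split=> //=.
- by rewrite divnK // dvdn_mull.
- by rewrite mulnC divnK // dvdn_mulr.
- exact: dvdn_trans dva1 (dvdn_trans h2 dva1').
- exact: dvdn_trans dvd1' (dvdn_trans h3 dvd1).
Qed.

End Spans.

Lemma pstar_optE (p p' : pattern) :
  chainable p p' -> pstar_opt p p' = Some (pstar p p').
Proof. by case=> e [h1 [h2 h3]]; rewrite /pstar_opt e eqxx h1 h2 h3. Qed.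

Lemma iter_prod_spans (beta : nat -> pattern) (q n : nat) :
  (forall l, q <= l < q + n -> chainable (beta l) (beta l.+1)) ->
  exists2 P, iter_prod beta q n = Some P & spans P (beta q) (beta (q + n)).
Proof.
elim: n => [|n IH] ch; first by exists (beta q); rewrite ?addn0.
have [|P EP sP] := IH.
  by move=> l /andP[ql ln]; apply: ch; rewrite ql addnS ltnW.
have chn : chainable (beta (q + n)) (beta (q + n.+1)).
  by rewrite addnS; apply: ch; rewrite leq_addr addnS ltnSn.
exists (pstar P (beta (q + n.+1))).
  by rewrite /= EP pstar_optE //; apply: chainable_spans sP (spans_refl _) chn.
exact: spans_pstar sP (spans_refl _) chn.
Qed.

Lemma iprod_spans (beta : nat -> pattern) (q s : nat) : q <= s ->
  (forall l, q <= l < s -> chainable (beta l) (beta l.+1)) ->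
  exists2 P, iprod beta q s = Some P & spans P (beta q) (beta s).
Proof. by move=> qs; rewrite /iprod -{1 3}(subnKC qs); apply: iter_prod_spans. Qed.

Theorem lemma4p10 (beta : nat -> pattern) (L : nat) :
  chainable_architecture beta L ->
  forall q s t : nat, 1 <= q -> q <= s -> s < t -> t <= L ->
  exists P1 P2 : pattern,
    iprod beta q s = Some P1 /\ iprod beta s.+1 t = Some P2 /\
    chainable P1 P2 /\ rval P1 P2 = rval (beta s) (beta s.+1).
Proof.
move=> [_ ch] q s t q1 qs st tL.
have chl l : q <= l < t -> chainable (beta l) (beta l.+1).
  by case/andP=> ql lt; apply: ch; rewrite (leq_trans q1 ql) (leq_trans lt tL).
have [P1 E1 s1] : exists2 P1, iprod beta q s = Some P1 & spans P1 (beta q) (beta s).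
  by apply: iprod_spans => // l /andP[ql ls]; apply: chl; rewrite ql (ltn_trans ls).
have [P2 E2 s2] : exists2 P2, iprod beta s.+1 t = Some P2 &
                               spans P2 (beta s.+1) (beta t).
  apply: iprod_spans => // l /andP[sl lt].
  by apply: chl; rewrite lt (leq_trans qs (ltnW sl)).
have chs : chainable (beta s) (beta s.+1) by apply: chl; rewrite qs.
exists P1, P2; split=> //; split=> //.
by split; [apply: chainable_spans s1 s2 chs | apply: rval_spans s1 s2].
Qed.
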